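(* Let $\mathbf{C}_\rho=\mathbb{E}_{\mathbf{x}\sim\rho}[\mathbf{x}\mathbf{x}^{\top}]\in\mathbb{R}^{d\times d}$ for a distribution $\rho$ on $\mathbb{R}^d$ with finite second moments, let $\lambda>0$, and let $\Omega$ be any set of real matrices with $d$ columns. For $\mathbf{X}\in\Omega$ write $\mathbf{M}=\mathbf{X}^{\top}\mathbf{X}$ and $\mathbf{M}_\lambda=\mathbf{M}+\lambda\mathbf{I}_d$, and for $t\ge 0$ define $$\bar{\varphi}_{\lambda,t}(\mathbf{M})=\big\|\mathbf{C}_\rho^{1/2}\big(\mathbf{I}-\mathbf{M}_\lambda^{+}\mathbf{M}\big)\big\|_F^{2}+t\,\mathrm{Tr}\big(\mathbf{C}_\rho(\mathbf{M}_\lambda^{+})^{2}\mathbf{M}\big).$$ Then $$\operatorname*{argmin}_{\mathbf{X}\in\Omega}\mathrm{Tr}\big(\mathbf{C}_\rho\mathbf{M}_\lambda^{-1}\big)=\operatorname*{argmin}_{\mathbf{X}\in\Omega}\bar{\varphi}_{\lambda,\lambda}(\mathbf{M}).$$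
   Context: ${}^{+}$ denotes the Moore–Penrose pseudoinverse, $\|\cdot\|_F$ the Frobenius norm, and $\mathbf{C}_\rho^{1/2}$ the positive semidefinite square root of $\mathbf{C}_\rho$. *)

From HB Require Import structures.
From mathcomp Require Import all_boot all_order all_algebra.
From mathcomp Require Import all_classical all_reals all_analysis.
Set Implicit Arguments. Unset Strict Implicit. Unset Printing Implicit Defensive.
Import Order.TTheory GRing.Theory Num.Theory.
Local Open Scope ring_scope.
Local Open Scope classical_set_scope.

(* Second-moment matrix C_rho = E[x x^T] of the random vector x = (X_0,...,X_{d-1}),
   i.e. of its distribution rho on R^d. *)
Definition second_moment {dT} {T : measurableType dT} {R : realType}
  (P : probability T R) (d : nat) (X : 'I_d -> {RV P >-> R}) : 'M[R]_d :=
  \matrix_(i, j) fine (expectation P (fun w => X i w * X j w)).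

Definition penrose {R : realType} (m n : nat) (A : 'M[R]_(m, n)) (B : 'M[R]_(n, m)) :=
  [/\ A *m B *m A = A, B *m A *m B = B,
      (A *m B)^T = A *m B & (B *m A)^T = B *m A].

(* Moore-Penrose pseudoinverse (unique when it exists; it always exists over R). *)
Definition mpinv {R : realType} (m n : nat) (A : 'M[R]_(m, n)) : 'M[R]_(n, m) :=
  xget 0 [set B | penrose A B].

Definition psd {R : realType} (n : nat) (S : 'M[R]_n) :=
  S^T = S /\ forall v : 'cV[R]_n, 0 <= (v^T *m S *m v) 0 0.

Definition frob {R : realType} (m n : nat) (A : 'M[R]_(m, n)) : R :=
  Num.sqrt (\sum_i \sum_j (A i j) ^+ 2).

Definition gram {R : realType} (d : nat) (X : {m : nat & 'M[R]_(m, d)}) : 'M[R]_d :=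
  (projT2 X)^T *m projT2 X.
Definition Mlam {R : realType} (d : nat) (lam : R) (M : 'M[R]_d) : 'M[R]_d :=
  M + lam%:M.

Definition phibar {R : realType} (d : nat) (C Csqrt : 'M[R]_d) (lam t : R)
  (M : 'M[R]_d) : R :=
  frob (Csqrt *m (1%:M - mpinv (Mlam lam M) *m M)) ^+ 2
  + t * \tr (C *m (mpinv (Mlam lam M) ^+ 2) *m M).

Definition argmin {T : Type} {R : realType} (Omega : set T) (f : T -> R) : set T :=
  [set x | Omega x /\ forall y, Omega y -> f x <= f y].

(* For lam > 0 the matrix M_lam = X^T X + lam I is invertible, so its pseudoinverse is its inverse
   N and I - N M = lam N. Hence phibar_{lam,lam}(M) = lam^2 Tr(C N^2) + lam Tr(C N^2 M)
   = lam Tr(C N^2 M_lam) = lam Tr(C N): the two objectives differ by the positive factor lam and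
   have the same minimisers. *)
From HB Require Import structures.
From mathcomp Require Import all_boot all_order all_algebra.
From mathcomp Require Import all_classical all_reals all_analysis.
From mathcomp Require Import ring.
Set Implicit Arguments. Unset Strict Implicit. Unset Printing Implicit Defensive.
Import Order.TTheory GRing.Theory Num.Theory.
Local Open Scope ring_scope.
Local Open Scope classical_set_scope.

Section MatrixFacts.

Variable R : realType.

Lemma row_mul_tr (n : nat) (v : 'rV[R]_n) : (v *m v^T) 0 0 = \sum_j v 0 j ^+ 2.
Proof. by rewrite mxE; apply: eq_bigr => j _; rewrite mxE expr2. Qed.

Lemma row_mul_tr_ge0 (n : nat) (v : 'rV[R]_n) : 0 <= (v *m v^T) 0 0.
Proof. by rewrite row_mul_tr; apply: sumr_ge0 => j _; apply: sqr_ge0. Qed.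

Lemma row_mul_tr_eq0 (n : nat) (v : 'rV[R]_n) : (v *m v^T) 0 0 = 0 -> v = 0.
Proof.
rewrite row_mul_tr => /psumr_eq0P v0; apply/rowP => j; rewrite mxE.
by apply/eqP; rewrite -sqrf_eq0 v0 // => i _; apply: sqr_ge0.
Qed.

Lemma gram_add_scalar_unitmx (m n : nat) (A : 'M[R]_(m, n)) (lam : R) :
  0 < lam -> A^T *m A + lam%:M \in unitmx.
Proof.
move=> lam_gt0; rewrite -row_free_unit; apply: inj_row_free => v vA0.
have : (v *m (A^T *m A + lam%:M) *m v^T) 0 0 = 0 by rewrite vA0 mul0mx mxE.
rewrite mulmxDr mulmxDl mul_mx_scalar -scalemxAl mxE [X in _ + X]mxE.
have -> : v *m (A^T *m A) *m v^T = v *m A^T *m (v *m A^T)^T.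
  by rewrite trmx_mul trmxK !mulmxA.
move/eqP; rewrite paddr_eq0 ?mulr_ge0 ?(ltW lam_gt0) ?row_mul_tr_ge0 // => /andP[_].
by rewrite mulf_eq0 gt_eqF //= => /eqP; apply: row_mul_tr_eq0.
Qed.

Lemma frob_sqr (m n : nat) (A : 'M[R]_(m, n)) : frob A ^+ 2 = \tr (A *m A^T).
Proof.
rewrite /frob sqr_sqrtr; last by do 2![apply: sumr_ge0 => ? _]; apply: sqr_ge0.
by apply: eq_bigr => i _; rewrite mxE; apply: eq_bigr => j _; rewrite mxE expr2.
Qed.

Lemma mpinv_unitmx (n : nat) (A : 'M[R]_n) : A \in unitmx -> mpinv A = invmx A.
Proof.
move=> uA; apply: xget_unique.
  by split; rewrite ?mulmxV ?mulVmx ?mul1mx ?trmx1.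
move=> B [ABA _ _ _].
have := congr1 (fun Z => invmx A *m Z *m invmx A) ABA.
by rewrite /= !mulmxA mulVmx // !mul1mx -!mulmxA mulmxV // mulmx1.
Qed.

Lemma phibar_lam_lam (d : nat) (C S M : 'M[R]_d) (lam : R) :
  S^T = S -> S *m S = C -> M^T = M -> Mlam lam M \in unitmx ->
  phibar C S lam lam M = lam * \tr (C *m invmx (Mlam lam M)).
Proof.
move=> St SS_C Mt uMl; rewrite /phibar mpinv_unitmx //.
set Ml := Mlam lam M; set N := invmx Ml.
have NMl : N *m Ml = 1%:M by rewrite mulVmx.
have Nt : N^T = N by rewrite /N trmx_inv /Ml /Mlam linearD /= Mt tr_scalar_mx.
have resolvent : 1%:M - N *m M = lam *: N.
  by rewrite -NMl -mulmxBr /Ml /Mlam addrAC subrr add0r mul_mx_scalar.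
have trSNNS : \tr (S *m N *m N *m S) = \tr (C *m N *m N).
  by rewrite -!mulmxA mxtrace_mulC -!mulmxA SS_C mulmxA mxtrace_mulC.
have trCN : \tr (C *m N) = \tr (C *m N *m N *m M) + lam * \tr (C *m N *m N).
  rewrite -{1}(mulmx1 (C *m N)) -NMl mulmxA /Ml /Mlam mulmxDr mxtraceD.
  by rewrite mul_mx_scalar mxtraceZ.
rewrite resolvent frob_sqr trmx_mul [(_ *: N)^T]linearZ /= Nt St.
rewrite -scalemxAr -!scalemxAl -scalemxAr !mxtraceZ !mulmxA trSNNS trCN; ring.
Qed.

End MatrixFacts.

Lemma argmin_pscale (T : Type) (R : realType) (Omega : set T) (f g : T -> R) (c : R) :
  0 < c -> (forall x, g x = c * f x) -> argmin Omega f = argmin Omega g.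
Proof.
move=> c_gt0 gE; apply/seteqP; split=> x [Ox x_min]; split=> // y Oy.
  by rewrite !gE ler_pM2l // x_min.
by have := x_min y Oy; rewrite !gE ler_pM2l.
Qed.

Theorem proposition6 (R : realType) (dT : measure_display) (T : measurableType dT)
  (P : probability T R) (d : nat) (X : 'I_d -> {RV P >-> R})
  (hX : forall i, (X i : T -> R) \in Lfun P 2%:E)
  (Csqrt : 'M[R]_d)
  (hsqrt : psd Csqrt /\ Csqrt *m Csqrt = second_moment X)
  (lam : R) (hlam : 0 < lam)
  (Omega : set {m : nat & 'M[R]_(m, d)}) :
  argmin Omega (fun Y => \tr (second_moment X *m invmx (Mlam lam (gram Y))))
  = argmin Omega (fun Y => phibar (second_moment X) Csqrt lam lam (gram Y)).
Proof.
case: hsqrt => [[Csqrt_t _] Csqrt_sq].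
apply: (argmin_pscale _ hlam) => Y.
apply: phibar_lam_lam => //; last exact: (gram_add_scalar_unitmx (projT2 Y) hlam).
by rewrite /gram trmx_mul trmxK.
Qed.
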